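(* Let $C,A^1,\dots,A^m\in\mathbb{S}^n$, $b\in\mathbb{R}^m$, with $\mathbf{P}$ and $\mathbf{D}$ feasible and $\mathbf{D}$ of singularity degree one, and let $0\le r<n$ be such that, writing $L(y)=C-\sum_iA^iy_i$ in blocks $L_{11}(y)\in\mathbb{S}^r$, $L_{12}(y)\in\mathbb{R}^{r\times(n-r)}$, $L_{22}(y)\in\mathbb{S}^{n-r}$: (a) for every $y$, $L(y)\succeq0$ iff $L_{12}(y)=0$, $L_{22}(y)=0$, $L_{11}(y)\succeq0$; (b) some $y$ has $L_{12}(y)=0$, $L_{22}(y)=0$, $L_{11}(y)\succ0$; (c) there is $X=\mathrm{diag}(0,X_{22})$ with $X_{22}\succ0$, $C\bullet X=0$, $A^i\bullet X=0$ for all $i$. Let $M>0$ be a constant such that for all $t\ge0$ and $y$, $L_{22}(y)+tI_{22}\succeq0$ implies $tMI_{22}\succeq L_{22}(y)+tI_{22}$, and set $K:=M(v(\mathbf{P})-v(\mathbf{D})+2)$. For $\alpha>0$, $t>0$ consider $$\mathbf{RD1}(\alpha,t):\ \max_y\ b^Ty-\frac{\|L_{12}(y)\|_F^2}{M\alpha}\ \text{ s.t. } L(y)+t\alpha I\succeq0 .$$ Then for every $\alpha>0$ there exists $\hat t_\alpha>0$ such that, for every $t\in(0,\hat t_\alpha)$ and every optimal sequence $\{y^k\}$ of $\mathbf{RD1}(\alpha,t)$, we have $\|L_{12}(y^k)\|_F^2\le K\alpha$ for all sufficiently large $k$.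
   Context: $\mathbf{P}$: $\min_X C\bullet X$ s.t. $A^i\bullet X=b_i$, $X\succeq0$; $\mathbf{D}$: $\max_y b^Ty$ s.t. $C-\sum_iA^iy_i\succeq0$; $v(\mathbf{P}),v(\mathbf{D})$ are their (finite) optimal values. $\mathbf{D}$ has singularity degree one if it is feasible and there exists a nonzero $X\succeq0$ with $C\bullet X=0$, $A^i\bullet X=0$ for all $i$, such that some $y$ has $C-\sum_iA^iy_i$ in the relative interior of $\{Z\succeq0: Z\bullet X=0\}$. An optimal sequence of $\mathbf{RD1}(\alpha,t)$ is a sequence of feasible points whose objective values converge to the optimal value (supremum) of $\mathbf{RD1}(\alpha,t)$. $\|\cdot\|_F$ is the Frobenius norm; $I_{22}$ is the $(n-r)\times(n-r)$ identity. *)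

From HB Require Import structures.
From mathcomp Require Import all_boot all_order all_algebra.
From mathcomp Require Import all_classical all_reals all_analysis.
Set Implicit Arguments. Unset Strict Implicit. Unset Printing Implicit Defensive.
Import Order.TTheory GRing.Theory Num.Theory.
Local Open Scope ring_scope.
Local Open Scope classical_set_scope.

Section SDP.
Variable R : realType.

Definition symmx n (X : 'M[R]_n) : Prop := X^T = X.

Definition psd n (X : 'M[R]_n) : Prop :=
  symmx X /\ forall v : 'cV[R]_n, 0 <= (v^T *m X *m v) 0 0.
Definition pd n (X : 'M[R]_n) : Prop :=
  symmx X /\ forall v : 'cV[R]_n, v != 0 -> 0 < (v^T *m X *m v) 0 0.

Definition fdot m n (A X : 'M[R]_(m, n)) : R := \tr (A^T *m X).
Definition frob m n (A : 'M[R]_(m, n)) : R := Num.sqrt (fdot A A).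

Definition Lmap n m (C : 'M[R]_n) (A : 'I_m -> 'M[R]_n) (y : 'cV[R]_m)
  : 'M[R]_n := C - \sum_(i < m) y i 0 *: A i.

Definition bty m (b y : 'cV[R]_m) : R := \sum_(i < m) b i 0 * y i 0.

Definition P_feas n m (A : 'I_m -> 'M[R]_n) (b : 'cV[R]_m) : set 'M[R]_n :=
  [set X | psd X /\ forall i, fdot (A i) X = b i 0].
Definition D_feas n m (C : 'M[R]_n) (A : 'I_m -> 'M[R]_n) : set 'cV[R]_m :=
  [set y | psd (Lmap C A y)].

Definition vP n m (C : 'M[R]_n) (A : 'I_m -> 'M[R]_n) (b : 'cV[R]_m) : R :=
  inf [set fdot C X | X in P_feas A b].
Definition vD n m (C : 'M[R]_n) (A : 'I_m -> 'M[R]_n) (b : 'cV[R]_m) : R :=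
  sup [set bty b y | y in D_feas C A].

Definition aff_hull n (F : set 'M[R]_n) : set 'M[R]_n :=
  [set W | exists (k : nat) (Z : 'I_k -> 'M[R]_n) (lam : 'I_k -> R),
     (forall j, F (Z j)) /\ \sum_(j < k) lam j = 1 /\
     W = \sum_(j < k) lam j *: Z j].
Definition relint n (F : set 'M[R]_n) : set 'M[R]_n :=
  [set Z | F Z /\ exists eps : R, 0 < eps /\
     forall W, aff_hull F W -> frob (W - Z) < eps -> F W].

Definition sing_deg_one n m (C : 'M[R]_n) (A : 'I_m -> 'M[R]_n) : Prop :=
  (exists y, D_feas C A y) /\
  exists X : 'M[R]_n, X != 0 /\ psd X /\ fdot C X = 0 /\
    (forall i, fdot (A i) X = 0) /\
    exists y, relint [set Z | psd Z /\ fdot Z X = 0] (Lmap C A y).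

Definition RD1_obj r s m (C : 'M[R]_(r + s)) (A : 'I_m -> 'M[R]_(r + s))
  (b : 'cV[R]_m) (M alpha : R) (y : 'cV[R]_m) : R :=
  bty b y - (frob (ursubmx (Lmap C A y))) ^+ 2 / (M * alpha).
Definition RD1_feas r s m (C : 'M[R]_(r + s)) (A : 'I_m -> 'M[R]_(r + s))
  (alpha t : R) : set 'cV[R]_m :=
  [set y | psd (Lmap C A y + (t * alpha) *: 1%:M)].

Definition RD1_optseq r s m (C : 'M[R]_(r + s)) (A : 'I_m -> 'M[R]_(r + s))
  (b : 'cV[R]_m) (M alpha t : R) (y : nat -> 'cV[R]_m) : Prop :=
  (forall k, RD1_feas C A alpha t (y k)) /\
  ((fun k => (RD1_obj C A b M alpha (y k))%:E) @ \oo -->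
     ereal_sup [set (RD1_obj C A b M alpha z)%:E | z in RD1_feas C A alpha t]).

End SDP.

(* Weak duality for the shifted constraint L(z) + c I >= 0 gives
   b^T z <= C.X + c tr X for every primal-feasible X; since the RD1 objective is
   b^T z - |L12(z)|^2/(M alpha), the penalty of any RD1-feasible z is at most
   C.X + t alpha tr X - obj(z).  Fix X within 1/2 of v(P) and t so small that
   t alpha tr X < 1/2.  A dual-feasible y within 1/2 of v(D) has L12(y) = 0 by
   (a), so it is RD1-feasible with objective b^T y, and an optimal sequence
   eventually has objective above b^T y - 1/2.  The four slacks of 1/2 add up to
   the 2 in K.  Only (a) and the feasibility of P and D are used.
   Nonnegativity of X.Z for PSD X, Z comes from a Gram decomposition
   Z = sum w w^T, obtained by symmetric Gaussian elimination. *)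

From HB Require Import structures.
From mathcomp Require Import all_boot all_order all_algebra.
From mathcomp Require Import all_classical all_reals all_analysis.
From mathcomp Require Import ring lra.
Import Order.TTheory GRing.Theory Num.Theory.
Set Implicit Arguments. Unset Strict Implicit.
Local Open Scope ring_scope.
Local Open Scope classical_set_scope.

Section PositiveSemidefinite.
Variable R : realType.
Implicit Types (n : nat) (c : R).

Definition bform n (Q : 'M[R]_n) (u v : 'cV[R]_n) : R := (u^T *m Q *m v) 0 0.

Lemma bformDl n (Q : 'M[R]_n) u1 u2 v : bform Q (u1 + u2) v = bform Q u1 v + bform Q u2 v.
Proof. by rewrite /bform linearD /= !mulmxDl mxE. Qed.

Lemma bformDr n (Q : 'M[R]_n) u v1 v2 : bform Q u (v1 + v2) = bform Q u v1 + bform Q u v2.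
Proof. by rewrite /bform mulmxDr mxE. Qed.

Lemma bformZl n (Q : 'M[R]_n) c u v : bform Q (c *: u) v = c * bform Q u v.
Proof. by rewrite /bform linearZ /= -!scalemxAl mxE. Qed.

Lemma bformZr n (Q : 'M[R]_n) c u v : bform Q u (c *: v) = c * bform Q u v.
Proof. by rewrite /bform -scalemxAr mxE. Qed.

Lemma bformBZ n (Q N : 'M[R]_n) c u v :
  bform (Q - c *: N) u v = bform Q u v - c * bform N u v.
Proof. by rewrite /bform mulmxBr mulmxBl -scalemxAr -scalemxAl !mxE. Qed.

Lemma bformC n (Q : 'M[R]_n) u v : symmx Q -> bform Q u v = bform Q v u.
Proof.
move=> HQ; rewrite /bform.
have -> : (u^T *m Q *m v) 0 0 = (u^T *m Q *m v)^T 0 0 by rewrite [RHS]mxE.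
by rewrite !trmx_mul trmxK HQ mulmxA.
Qed.

Lemma bform_delta n (Q : 'M[R]_n) i j : bform Q (delta_mx i 0) (delta_mx j 0) = Q i j.
Proof. by rewrite /bform trmx_delta -rowE -colE !mxE. Qed.

Lemma bform_outer n (w u v : 'cV[R]_n) :
  bform (w *m w^T) u v = (u^T *m w) 0 0 * (w^T *m v) 0 0.
Proof. by rewrite /bform !mulmxA -mulmxA [in LHS]mxE big_ord1. Qed.

Lemma mxtrace_mul_outer n (P : 'M[R]_n) (w : 'cV[R]_n) : \tr (P *m (w *m w^T)) = bform P w w.
Proof. by rewrite /bform mulmxA mxtrace_mulC mulmxA /mxtrace big_ord1. Qed.

Lemma symmxE n (Q : 'M[R]_n) i j : symmx Q -> Q j i = Q i j.
Proof. by move=> HQ; rewrite -[in LHS]HQ mxE. Qed.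

Lemma psd_diag_ge0 n (Q : 'M[R]_n) i : psd Q -> 0 <= Q i i.
Proof. by case=> _ HQ; rewrite -bform_delta; apply: HQ. Qed.

(* Otherwise [bform Q (c e_k + e_j)] would be negative for a suitable [c]. *)
Lemma psd_diag_eq0_row n (Q : 'M[R]_n) k j : psd Q -> Q k k = 0 -> Q k j = 0.
Proof.
move=> [Qsym Qpsd] Qkk0; apply/eqP; apply: contraT => Qkj_neq0.
pose c := - (Q j j + 1) / (2 * Q k j).
have := Qpsd (c *: delta_mx k 0 + delta_mx j 0); rewrite -/(bform Q _ _).
rewrite bformDl !bformDr !bformZl !bformZr !bform_delta Qkk0 (symmxE k j Qsym).
have -> : c * (c * 0) + c * Q k j + (c * Q k j + Q j j) = - 1 by rewrite /c; field.
by rewrite ler0N1.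
Qed.

Lemma psd_trace_ge0 n (X : 'M[R]_n) : psd X -> 0 <= \tr X.
Proof. by move=> HX; apply: sumr_ge0 => i _; exact: psd_diag_ge0. Qed.

Lemma psdD n (P Q : 'M[R]_n) : psd P -> psd Q -> psd (P + Q).
Proof.
move=> [Psym HP] [Qsym HQ]; split; first by rewrite /symmx linearD /= Psym Qsym.
by move=> v; rewrite mulmxDr mulmxDl mxE addr_ge0.
Qed.

Lemma psd_scalar_mx n c : 0 <= c -> psd (c *: (1%:M : 'M[R]_n)).
Proof.
move=> c_ge0; split; first by rewrite /symmx linearZ /= trmx1.
move=> v; rewrite -scalemxAr mulmx1 -scalemxAl mxE mulr_ge0 // mxE.
by apply: sumr_ge0 => i _; rewrite mxE -expr2 sqr_ge0.
Qed.

Section Peel.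
Variables (n : nat) (Q : 'M[R]_n) (k : 'I_n).
Let a := Q k k.
Let w := col k Q.
(* One step of symmetric Gaussian elimination with pivot [Q k k]. *)
Definition peel := Q - a^-1 *: (w *m w^T).

Lemma peelE i j : peel i j = Q i j - a^-1 * (Q i k * Q j k).
Proof. by rewrite /peel !mxE big_ord1 !mxE. Qed.

Hypotheses (Qpsd : psd Q) (a_gt0 : 0 < a).

(* Schur complement: evaluate [Q] at [v - (bform Q v e_k / a) e_k]. *)
Lemma psd_peel : psd peel.
Proof.
have [Qsym Qpos] := Qpsd.
split; first by rewrite /symmx /peel linearB /= linearZ /= trmx_mul trmxK Qsym.
move=> v; rewrite -/(bform peel v v) bformBZ bform_outer.
have wE : (v^T *m w) 0 0 = bform Q v (delta_mx k 0) by rewrite /bform /w colE mulmxA.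
have wE' : (w^T *m v) 0 0 = (v^T *m w) 0 0.
  by rewrite !mxE; apply: eq_bigr => i _; rewrite !mxE mulrC.
rewrite wE' wE.
have := Qpos (v - (bform Q v (delta_mx k 0) / a) *: delta_mx k 0).
rewrite -/(bform Q _ _) -scaleNr bformDl !bformDr !bformZl !bformZr bform_delta.
rewrite (bformC (delta_mx k 0) v Qsym) -/a.
set x := bform Q v (delta_mx k 0); set y := bform Q v v.
suff -> : y - a^-1 * (x * x) =
          y + - (x / a) * x + (- (x / a) * x + - (x / a) * (- (x / a) * a)) by [].
by field; rewrite gt_eqF.
Qed.

Lemma peel_row_eq0 i j : (i = k \/ forall l, Q i l = 0) -> peel i j = 0.
Proof.
rewrite peelE => -[-> | Qi0]; last by rewrite !Qi0 mul0r mulr0 subrr.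
by rewrite (symmxE _ _ Qpsd.1) -/a mulrA mulVf ?gt_eqF // mul1r subrr.
Qed.

End Peel.

Lemma psd_gram n (Q : 'M[R]_n) :
  psd Q -> exists ws : seq 'cV[R]_n, Q = \sum_(w <- ws) w *m w^T.
Proof.
pose zero_rows k (S : 'M[R]_n) := forall i j : 'I_n, (i < k)%N -> S i j = 0.
have gram0 k S : (n <= k)%N -> zero_rows k S ->
    exists ws : seq 'cV[R]_n, S = \sum_(w <- ws) w *m w^T.
  move=> k_ge S0; exists [::]; rewrite big_nil; apply/matrixP => i j.
  by rewrite mxE S0 // (leq_trans (ltn_ord i) k_ge).
suff gram_from d k S : (n - k <= d)%N -> psd S -> zero_rows k S ->
    exists ws : seq 'cV[R]_n, S = \sum_(w <- ws) w *m w^T.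
  by move=> Qpsd; apply: (gram_from n 0%N) => //; rewrite subn0.
elim: d k S {Q} => [|d IH] k S nk_le Spsd S0.
  by apply: gram0 S0; rewrite -subn_eq0 -leqn0.
have [k_ge|k_lt] := leqP n k; first exact: gram0 S0.
have {}IH := IH k.+1; rewrite subnS -ltnS prednK ?subn_gt0 // in IH.
pose kk := Ordinal k_lt.
have zero_rowsS (S' : 'M[R]_n) : (forall i j : 'I_n, (i < k)%N -> S' i j = 0) ->
    (forall j, S' kk j = 0) -> zero_rows k.+1 S'.
  move=> S'0 S'kk i j; rewrite ltnS leq_eqVlt => /predU1P[ik|]; last exact: S'0.
  by have -> : i = kk by exact: val_inj.
have [Skk0|Skk_gt0] := eqVneq (S kk kk) 0.
  apply/(IH S nk_le Spsd)/zero_rowsS => [|j]; first exact: S0.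
  exact: psd_diag_eq0_row Spsd Skk0.
have {}Skk_gt0 : 0 < S kk kk by rewrite lt_def Skk_gt0 psd_diag_ge0.
have peel_zero_rows : zero_rows k.+1 (peel S kk).
  apply: zero_rowsS => [i j ik|j]; apply: (peel_row_eq0 Spsd Skk_gt0); last by left.
  by right=> j'; exact: S0.
have [ws Hws] := IH _ nk_le (psd_peel Spsd Skk_gt0) peel_zero_rows.
exists ((Num.sqrt (S kk kk))^-1 *: col kk S :: ws).
rewrite big_cons -Hws /peel linearZ /= -scalemxAl -scalemxAr scalerA -invrM ?unitfE;
  try by rewrite gt_eqF ?sqrtr_gt0.
by rewrite -expr2 sqr_sqrtr ?ltW // addrC subrK.
Qed.

Lemma fdot_psd_ge0 n (P Q : 'M[R]_n) : psd P -> psd Q -> 0 <= fdot P Q.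
Proof.
move=> [Psym Ppos] /psd_gram[ws ->]; rewrite /fdot Psym mulmx_sumr linear_sum.
by apply: sumr_ge0 => w _; rewrite /= mxtrace_mul_outer; exact: Ppos.
Qed.

Lemma fdotD m n (P Q X : 'M[R]_(m, n)) : fdot (P + Q) X = fdot P X + fdot Q X.
Proof. by rewrite /fdot linearD /= mulmxDl mxtraceD. Qed.

Lemma fdot_scalar_mx n c (X : 'M[R]_n) : fdot (c *: 1%:M) X = c * \tr X.
Proof. by rewrite /fdot linearZ /= trmx1 -scalemxAl mul1mx mxtraceZ. Qed.

Lemma fdot_Lmap n m (C : 'M[R]_n) (A : 'I_m -> 'M[R]_n) y X :
  fdot (Lmap C A y) X = fdot C X - \sum_(i < m) y i 0 * fdot (A i) X.
Proof.
rewrite /fdot /Lmap linearB /= mulmxBl raddfB /=; congr (_ - _).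
rewrite raddf_sum mulmx_suml raddf_sum; apply: eq_bigr => i _.
by rewrite /= linearZ /= -scalemxAl mxtraceZ.
Qed.

Lemma weak_duality_shifted n m (C : 'M[R]_n) (A : 'I_m -> 'M[R]_n) b X y c :
  P_feas A b X -> psd (Lmap C A y + c *: 1%:M) -> bty b y <= fdot C X + c * \tr X.
Proof.
move=> [Xpsd Xfeas] /fdot_psd_ge0 /(_ Xpsd).
rewrite fdotD fdot_Lmap fdot_scalar_mx.
have -> : \sum_(i < m) y i 0 * fdot (A i) X = bty b y.
  by apply: eq_bigr => i _; rewrite Xfeas mulrC.
lra.
Qed.

Lemma weak_duality n m (C : 'M[R]_n) (A : 'I_m -> 'M[R]_n) b X y :
  P_feas A b X -> D_feas C A y -> bty b y <= fdot C X.
Proof.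
move=> HX Hy; rewrite -[fdot C X]addr0 -(mul0r (\tr X)).
by apply: weak_duality_shifted HX _; rewrite scale0r addr0.
Qed.

End PositiveSemidefinite.

Section NearOptimal.
Variables (R : realType) (n m : nat) (C : 'M[R]_n) (A : 'I_m -> 'M[R]_n) (b : 'cV[R]_m).
Hypotheses (Pfeas : exists X, P_feas A b X) (Dfeas : exists y, D_feas C A y).

Lemma primal_near_optimal e :
  0 < e -> exists2 X, P_feas A b X & fdot C X < vP C A b + e.
Proof.
move=> e_gt0; have [X0 HX0] := Pfeas; have [y0 Hy0] := Dfeas.
have hinf : has_inf [set fdot C X | X in P_feas A b].
  split; first by exists (fdot C X0), X0.
  by exists (bty b y0) => _ [X HX <-]; exact: weak_duality HX Hy0.
by have [_ [X HX <-]] := inf_adherent e_gt0 hinf; exists X.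
Qed.

Lemma dual_near_optimal e :
  0 < e -> exists2 y, D_feas C A y & vD C A b - e < bty b y.
Proof.
move=> e_gt0; have [X0 HX0] := Pfeas; have [y0 Hy0] := Dfeas.
have hsup : has_sup [set bty b y | y in D_feas C A].
  split; first by exists (bty b y0), y0.
  by exists (fdot C X0) => _ [y Hy <-]; exact: weak_duality HX0 Hy.
by have [_ [y Hy <-]] := sup_adherent e_gt0 hsup; exists y.
Qed.

End NearOptimal.

Section RegularizedDual.
Variables (R : realType) (r s m : nat) (C : 'M[R]_(r + s)) (A : 'I_m -> 'M[R]_(r + s)).
Variables (b : 'cV[R]_m) (M alpha t : R).

Lemma RD1_penalty_le X z : P_feas A b X -> RD1_feas C A alpha t z ->
  frob (ursubmx (Lmap C A z)) ^+ 2 / (M * alpha) <=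
  fdot C X + t * alpha * \tr X - RD1_obj C A b M alpha z.
Proof. by move=> HX /(weak_duality_shifted HX); rewrite /RD1_obj; lra. Qed.

Lemma RD1_feas_D y : 0 <= t * alpha -> D_feas C A y -> RD1_feas C A alpha t y.
Proof. by move=> ta_ge0 Hy; apply: psdD Hy (psd_scalar_mx _ ta_ge0). Qed.

Lemma RD1_obj_ursubmx0 y :
  ursubmx (Lmap C A y) = 0 -> RD1_obj C A b M alpha y = bty b y.
Proof.
move=> L12; rewrite /RD1_obj L12 /frob /fdot trmx0 mul0mx mxtrace0.
by rewrite sqrtr0 expr0n mul0r subr0.
Qed.

End RegularizedDual.

Lemma cvg_ereal_sup_gt (R : realType) (u : nat -> R) (S : set (\bar R)) x a :
  (fun k => (u k)%:E) @ \oo --> ereal_sup S -> S x%:E -> a < x ->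
  \forall k \near \oo, a < u k.
Proof.
move=> u_cvg Sx ax.
have a_lt_sup : (a%:E < ereal_sup S)%E.
  by apply: lt_le_trans (ereal_sup_ubound Sx); rewrite lte_fin.
have := u_cvg _ (open_ereal_gt' a_lt_sup).
by move=> [N _ HN]; exists N => // k /HN /=; rewrite lte_fin.
Qed.

Unset Implicit Arguments.
Set Strict Implicit.

Theorem lemma4 (R : realType) (r s m : nat) (Hs : (0 < s)%N)
  (C : 'M[R]_(r + s)) (A : 'I_m -> 'M[R]_(r + s)) (b : 'cV[R]_m)
  (HCsym : symmx C) (HAsym : forall i, symmx (A i))
  (HPfeas : exists X, P_feas A b X)
  (HDfeas : exists y, D_feas C A y)
  (Hsd1 : sing_deg_one C A)
  (Ha : forall y : 'cV[R]_m,
      psd (Lmap C A y) <->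
      [/\ ursubmx (Lmap C A y) = 0, drsubmx (Lmap C A y) = 0
        & psd (ulsubmx (Lmap C A y))])
  (Hb : exists y : 'cV[R]_m,
      [/\ ursubmx (Lmap C A y) = 0, drsubmx (Lmap C A y) = 0
        & pd (ulsubmx (Lmap C A y))])
  (Hc : exists X22 : 'M[R]_s,
      pd X22 /\
      fdot C (block_mx 0 0 0 X22) = 0 /\
      forall i, fdot (A i) (block_mx 0 0 0 X22) = 0)
  (M : R) (HM : 0 < M)
  (HMbound : forall (t : R) (y : 'cV[R]_m), 0 <= t ->
      psd (drsubmx (Lmap C A y) + t *: 1%:M) ->
      psd ((t * M) *: 1%:M - (drsubmx (Lmap C A y) + t *: 1%:M))) :
  let K := M * (vP C A b - vD C A b + 2) in
  forall alpha : R, 0 < alpha ->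
  exists that : R, 0 < that /\
    forall t : R, 0 < t -> t < that ->
    forall y : nat -> 'cV[R]_m,
      RD1_optseq C A b M alpha t y ->
      exists N : nat, forall k : nat, (N <= k)%N ->
        (frob (ursubmx (Lmap C A (y k)))) ^+ 2 <= K * alpha.
Proof.
move=> K alpha alpha_gt0.
have half_gt0 : (0 : R) < 1 / 2 by rewrite divr_gt0.
have [X HX X_opt] := primal_near_optimal HPfeas HDfeas half_gt0.
have [yD HyD yD_opt] := dual_near_optimal HPfeas HDfeas half_gt0.
have trX_ge0 : 0 <= \tr X by apply: psd_trace_ge0; case: HX.
have scale_gt0 : 0 < 2 * alpha * (\tr X + 1) by rewrite !mulr_gt0 // ltr_wpDl.
exists (2 * alpha * (\tr X + 1))^-1; split; first by rewrite invr_gt0.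
move=> t t_gt0 t_lt y [y_feas y_cvg].
have shift_lt : t * alpha * \tr X < 1 / 2.
  move: t_lt; rewrite -(ltr_pM2r scale_gt0) mulVf ?gt_eqF //.
  have : 0 < t * alpha by rewrite mulr_gt0.
  nra.
have [yD_L12 _ _] := (Ha yD).1 HyD.
have yD_feas := RD1_feas_D (mulr_ge0 (ltW t_gt0) (ltW alpha_gt0)) HyD.
have obj_near : \forall k \near \oo, bty b yD - 1 / 2 < RD1_obj C A b M alpha (y k).
  apply: cvg_ereal_sup_gt y_cvg _ _; first by exists yD => //; rewrite RD1_obj_ursubmx0.
  by rewrite RD1_obj_ursubmx0 //; lra.
have [N _ obj_gt] := obj_near.
exists N => k /obj_gt obj_k.
have penalty_le := RD1_penalty_le M HX (y_feas k).
rewrite (_ : K * alpha = (vP C A b - vD C A b + 2) * (M * alpha)); last by rewrite /K; ring.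
rewrite -ler_pdivrMr ?mulr_gt0 //; lra.
Qed.
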